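(* Let $\mathcal{S}=\{s_1,\dots,s_N\}$ be a finite state space, $\mathcal{A}$ a finite action space and $\gamma\in(0,1)$. Consider the real MDP $\langle\mathcal{S},\mathcal{A},\mathbb{P},R,\gamma\rangle$ and the DT MDP $\langle\mathcal{S},\mathcal{A},\mathbb{P}',R',\gamma\rangle$. Then for every deterministic policy $\pi:\mathcal{S}\to\mathcal{A}$, $$\|V_{\mathrm{real}}^*-V_{\mathrm{real}}^{\pi}\|\le \frac{2}{1-\gamma}\max_i \bar d(s_i,s_i)+\frac{1+\gamma}{1-\gamma}\|V_{\mathrm{DT}}^*-V_{\mathrm{DT}}^{\pi}\|\le \frac{2}{(1-\gamma)^2}\max_i d_{\mathrm{TV}}(s_i,s_i)+\frac{1+\gamma}{1-\gamma}\|V_{\mathrm{DT}}^*-V_{\mathrm{DT}}^{\pi}\|.$$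
   Context: $\mathbb{P}(\cdot|s,a)$ and $\mathbb{P}'(\cdot|s,a)$ are probability distributions on $\mathcal{S}$ for each $(s,a)$; $R,R':\mathcal{S}\times\mathcal{A}\to\mathbb{R}$ are reward functions. For a deterministic policy $\pi$, $V^\pi_{\mathrm{real}}$ is the unique solution of $V(s)=R(s,\pi(s))+\gamma\sum_{\tilde s}\mathbb{P}(\tilde s|s,\pi(s))V(\tilde s)$ for all $s$, and $V^*_{\mathrm{real}}$ the unique solution of $V(s)=\max_a\{R(s,a)+\gamma\sum_{\tilde s}\mathbb{P}(\tilde s|s,a)V(\tilde s)\}$; $V^\pi_{\mathrm{DT}},V^*_{\mathrm{DT}}$ are defined in the same way with $\mathbb{P}',R'$. Define $\|V^*_{\mathrm{real}}-V^\pi_{\mathrm{real}}\|=\max_i\{V^*_{\mathrm{real}}(s_i)-V^\pi_{\mathrm{real}}(s_i)\}$ and similarly $\|V^*_{\mathrm{DT}}-V^\pi_{\mathrm{DT}}\|$. Let $R_{\max}=\max_{i,j,a}|R(s_i,a)-R'(s_j,a)|$. For probability distributions $P,Q$ on $\mathcal{S}$ and a cost $d:\mathcal{S}\times\mathcal{S}\to[0,\infty)$ (not required to vanish on the diagonal; the first argument is regarded as a state of the real MDP and the second as a state of the DT MDP), $W_1(P,Q;d)=\min_{\Lambda}\sum_{i,j}\lambda_{i,j}d(s_i,s_j)$, the minimum over nonnegative $N\times N$ matrices $\Lambda=(\lambda_{i,j})$ with $\sum_j\lambda_{i,j}=P(s_i)$ and $\sum_i\lambda_{i,j}=Q(s_j)$.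 Define $d_0\equiv0$ and $d_n(s_i,s_j)=\max_a\{|R(s_i,a)-R'(s_j,a)|+\gamma W_1(\mathbb{P}(\cdot|s_i,a),\mathbb{P}'(\cdot|s_j,a);d_{n-1})\}$; the DT bisimulation metric $\bar d$ is the pointwise limit (equivalently supremum) of the nondecreasing sequence $d_n$, and it satisfies $\bar d(s_i,s_j)=\max_a\{|R(s_i,a)-R'(s_j,a)|+\gamma W_1(\mathbb{P}(\cdot|s_i,a),\mathbb{P}'(\cdot|s_j,a);\bar d)\}$. With $\mathrm{TV}(P,Q)=\frac12\sum_i|P(s_i)-Q(s_i)|$, define $d_{\mathrm{TV}}(s_i,s_i)=\max_a\{|R(s_i,a)-R'(s_i,a)|+\frac{\gamma R_{\max}}{1-\gamma}\mathrm{TV}(\mathbb{P}(\cdot|s_i,a),\mathbb{P}'(\cdot|s_i,a))\}$. *)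

From HB Require Import structures.
From mathcomp Require Import all_boot all_order all_algebra.
From mathcomp Require Import classical_sets reals.
Set Implicit Arguments. Unset Strict Implicit. Unset Printing Implicit Defensive.
Import Order.TTheory GRing.Theory Num.Theory.
Local Open Scope ring_scope.
Local Open Scope classical_set_scope.

Section MDP.
Variables (R : realType) (S A : finType).

(* exact maximum of F over a finite type (0 if the type is empty) *)
Definition fmax (T : finType) (F : T -> R) : R :=
  match [pick x : T] with
  | Some x0 => \big[Num.max/F x0]_(x : T) F x
  | None => 0
  end.

Definition is_distr (P : S -> R) : Prop :=
  (forall s, 0 <= P s) /\ \sum_(s : S) P s = 1.

Definition is_kernel (P : S -> A -> S -> R) : Prop :=
  forall s a, is_distr (P s a).

Definition is_Vpi (gamma : R) (P : S -> A -> S -> R) (Rw : S -> A -> R)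
  (pi : S -> A) (V : S -> R) : Prop :=
  forall s, V s = Rw s (pi s) + gamma * \sum_(t : S) P s (pi s) t * V t.

Definition is_Vstar (gamma : R) (P : S -> A -> S -> R) (Rw : S -> A -> R)
  (V : S -> R) : Prop :=
  forall s, V s = fmax (fun a : A => Rw s a + gamma * \sum_(t : S) P s a t * V t).

Definition gapnorm (Vs Vp : S -> R) : R := fmax (fun s : S => Vs s - Vp s).

(* couplings of P (first marginal, real state) and Q (second, DT state) *)
Definition coupling (P Q : S -> R) (L : S -> S -> R) : Prop :=
  (forall i j, 0 <= L i j) /\
  (forall i, \sum_(j : S) L i j = P i) /\
  (forall j, \sum_(i : S) L i j = Q j).

(* Wasserstein-1 with cost d: min over couplings (written as inf; attained) *)
Definition W1 (P Q : S -> R) (d : S -> S -> R) : R :=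
  inf [set x | exists L, coupling P Q L /\
                 x = \sum_(i : S) \sum_(j : S) L i j * d i j].

Fixpoint dn (gamma : R) (P P' : S -> A -> S -> R) (Rw Rw' : S -> A -> R)
  (n : nat) : S -> S -> R :=
  match n with
  | 0 => fun _ _ => 0
  | n'.+1 => fun si sj =>
      fmax (fun a : A => `|Rw si a - Rw' sj a|
              + gamma * W1 (P si a) (P' sj a) (dn gamma P P' Rw Rw' n'))
  end.

(* DT bisimulation metric: supremum (= limit) of the nondecreasing d_n *)
Definition dbar (gamma : R) (P P' : S -> A -> S -> R) (Rw Rw' : S -> A -> R)
  (si sj : S) : R :=
  sup [set dn gamma P P' Rw Rw' n si sj | n in [set: nat]].

Definition Rmax (Rw Rw' : S -> A -> R) : R :=
  fmax (fun x : S * S * A => `|Rw x.1.1 x.2 - Rw' x.1.2 x.2|).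

Definition TV (P Q : S -> R) : R := 2^-1 * \sum_(i : S) `|P i - Q i|.

Definition dTV (gamma : R) (P P' : S -> A -> S -> R) (Rw Rw' : S -> A -> R)
  (s : S) : R :=
  fmax (fun a : A => `|Rw s a - Rw' s a|
          + gamma * Rmax Rw Rw' / (1 - gamma) * TV (P s a) (P' s a)).

End MDP.

From HB Require Import structures.
From mathcomp Require Import all_boot all_order all_algebra.
From mathcomp Require Import classical_sets reals.
From mathcomp Require Import ring lra.
Import Order.TTheory GRing.Theory Num.Theory.
Local Open Scope ring_scope.

Set Implicit Arguments. Unset Strict Implicit.

(* Each Bellman backup of the real and DT optimal values is controlled, through
   any coupling of the two transition laws, by one step of the d_n recursion;
   by induction |V*_real(s) - V*_DT(s')| <= d_n(s, s') + gamma^n C with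
   C = max |V*_real - V*_DT|, and letting n go to infinity bounds it (and the
   gap between the two Q-values) by dbar.
   Writing V* - V^pi of the real MDP as a Bellman residual plus gamma times its
   average then gives the contraction
     ||V*_real - V^pi_real|| <= 2 max_s dbar(s,s) + ||V*_DT - V^pi_DT||
                               + gamma ||V*_real - V^pi_real||.
   For the second inequality, the maximal coupling of P and P' (keeping the mass
   min(P, P') on the diagonal) gives W1(P, P'; d) <= max_s d(s,s) + ||d|| TV(P, P'),
   and ||d_n|| <= Rmax / (1 - gamma), so d_n(s,s) <= max_s dTV(s) / (1 - gamma)
   by induction. *)

Section Fmax.
Variables (R : realType) (T : finType).
Implicit Types (F G : T -> R) (c : R).

Lemma le_fmax F x : F x <= fmax F.
Proof. by rewrite /fmax; case: pickP => [x0 _|/(_ x)//]; exact: le_bigmax. Qed.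

Lemma fmax_le F c : 0 <= c -> (forall x, F x <= c) -> fmax F <= c.
Proof. by move=> c0 Fc; rewrite /fmax; case: pickP => // x0 _; apply: bigmax_le. Qed.

Lemma fmax_ge0 F : (forall x, 0 <= F x) -> 0 <= fmax F.
Proof.
move=> F0; rewrite /fmax; case: pickP => // x0 _.
exact: le_trans (F0 x0) (le_bigmax _ _ _).
Qed.

Lemma le_fmax2 F G : (forall x, F x <= G x) -> fmax F <= fmax G.
Proof.
move=> FG; rewrite /fmax; case: pickP => // x0 _.
by apply: bigmax_le => [|x _]; [exact: le_trans (FG x0) (le_bigmax _ _ _) |
  exact: le_trans (FG x) (le_bigmax _ _ _)].
Qed.

Lemma fmax_dist_le F G : `|fmax F - fmax G| <= fmax (fun x => `|F x - G x|).
Proof.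
have fmaxD F1 F2 : fmax F1 <= fmax F2 + fmax (fun x => `|F1 x - F2 x|).
  rewrite /fmax; case: pickP => [x0 _|_]; last by rewrite addr0.
  have le_x x : F1 x <= \big[Num.max/F2 x0]_y F2 y
                        + \big[Num.max/`|F1 x0 - F2 x0|]_y `|F1 y - F2 y|.
    apply: le_trans (lerD (le_bigmax _ _ x) (le_bigmax _ _ x)).
    by rewrite -lerBlDl ler_norm.
  by apply: bigmax_le => [|x _]; exact: le_x.
rewrite ler_norml lerBlDl fmaxD andbT lerNl opprB lerBlDl.
apply: le_trans (fmaxD G F) _; rewrite lerD2l.
by apply: le_fmax2 => x; rewrite distrC.
Qed.

End Fmax.

Lemma fmax_contraction (R : realType) (T : finType) (F : T -> R) (g c : R) :
  0 <= g < 1 -> 0 <= c -> (forall x, F x <= c + g * fmax F) -> fmax F <= c / (1 - g).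
Proof.
move=> /andP[g0 g1] c0 Fc; rewrite ler_pdivlMr ?subr_gt0 //.
have [h0|h_gt0] := leP (fmax F) 0; first by nra.
suff : fmax F <= c + g * fmax F by lra.
by apply: fmax_le => //; apply: addr_ge0 => //; apply: mulr_ge0 => //; exact: ltW.
Qed.

Section Geometric.
Variable R : realType.

Lemma ler_bernoulli (h : R) n : 0 <= h -> 1 + h *+ n <= (1 + h) ^+ n.
Proof.
move=> h0; elim: n => [|n IHn]; first by rewrite mulr0n addr0 expr0.
rewrite exprS mulrSr; apply: le_trans (ler_wpM2l _ IHn); last by lra.
have : 0 <= h * h *+ n by rewrite mulrn_wge0 ?mulr_ge0.
by rewrite mulrDr mulrDl mul1r mulr1 mulrnAr; lra.
Qed.

Lemma geometric_lt (g e M : R) : 0 < g < 1 -> 0 < e -> exists n, g ^+ n * M < e.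
Proof.
move=> /andP[g0 g1] e0; have [M0|M_gt0] := leP M 0.
  by exists 0%N; rewrite expr0 mul1r; lra.
pose h := g^-1 - 1; have h0 : 0 < h by rewrite subr_gt0 invf_gt1.
have := archi_boundP (ltW (divr_gt0 M_gt0 (mulr_gt0 e0 h0))).
set n := Num.Def.archi_bound _; rewrite ltr_pdivrMr ?mulr_gt0 // => Mn.
exists n.
have M_lt : M < e * (1 + h) ^+ n.
  apply: lt_le_trans (_ : e * (1 + h *+ n) <= _); last first.
    by apply: ler_wpM2l; [exact: ltW | exact: ler_bernoulli (ltW h0)].
  by rewrite -mulr_natr; nra.
have gh : g ^+ n * (1 + h) ^+ n = 1.
  by rewrite -exprMn /h addrC subrK mulfV ?gt_eqF // expr1n.
by rewrite -(ltr_pM2l (exprn_gt0 n g0)) mulrCA gh mulr1 in M_lt.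
Qed.

Lemma le_geometric_slack (g M x y : R) :
  0 < g < 1 -> (forall n, x <= y + g ^+ n * M) -> x <= y.
Proof.
move=> g01 le_xy; apply/ler_addgt0Pr => e e0.
have [n lt_e] := geometric_lt M g01 e0.
by apply: le_trans (le_xy n) _; rewrite lerD2l ltW.
Qed.

End Geometric.

Section Expectation.
Variables (R : realType) (S : finType) (P : S -> R).
Implicit Types (f g : S -> R) (c : R).

Lemma expectB f g : \sum_s P s * (f s - g s) = \sum_s P s * f s - \sum_s P s * g s.
Proof. by rewrite -sumrB; apply: eq_bigr => s _; rewrite mulrBr. Qed.

Hypothesis dP : is_distr P.

Lemma expect_le f c : (forall s, f s <= c) -> \sum_s P s * f s <= c.
Proof.
case: dP => P0 P1 fc; apply: le_trans (_ : \sum_s P s * c <= c).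
  by apply: ler_sum => s _; apply: ler_wpM2l.
by rewrite -mulr_suml P1 mul1r.
Qed.

Lemma expect_ge f c : (forall s, c <= f s) -> c <= \sum_s P s * f s.
Proof.
case: dP => P0 P1 fc; apply: le_trans (_ : \sum_s P s * c <= _).
  by rewrite -mulr_suml P1 mul1r.
by apply: ler_sum => s _; apply: ler_wpM2l.
Qed.

End Expectation.

Section Wasserstein.
Variables (R : realType) (S : finType).
Implicit Types (P Q f g : S -> R) (d L : S -> S -> R).

Local Notation cost L d := (\sum_i \sum_j L i j * d i j).

Lemma coupling_prod P Q : is_distr P -> is_distr Q -> coupling P Q (fun i j => P i * Q j).
Proof.
move=> [P0 P1] [Q0 Q1]; split; first by move=> i j; apply: mulr_ge0.
by split=> [i|j]; [rewrite -mulr_sumr Q1 mulr1 | rewrite -mulr_suml P1 mul1r].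
Qed.

Lemma coupling_mass P Q L : is_distr P -> coupling P Q L -> \sum_i \sum_j L i j = 1.
Proof. by move=> [_ P1] [_ [LP _]]; under eq_bigr => i _ do rewrite LP. Qed.

Lemma coupling_expectB P Q L f g : coupling P Q L ->
  \sum_k P k * f k - \sum_l Q l * g l = cost L (fun k l => f k - g l).
Proof.
move=> [_ [LP LQ]].
under eq_bigr => k _ do rewrite -LP mulr_suml.
under [X in _ - X]eq_bigr => l _ do rewrite -LQ mulr_suml.
rewrite [X in _ - X]exchange_big -sumrB; apply: eq_bigr => k _.
by rewrite -sumrB; apply: eq_bigr => l _; rewrite mulrBr.
Qed.

Lemma W1_le_coupling P Q d L :
  (forall i j, 0 <= d i j) -> coupling P Q L -> W1 P Q d <= cost L d.
Proof.
move=> d0 cL; apply: ge_inf; last by exists L.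
exists 0 => _ [L' [[L'0 _] ->]].
by do 2!(apply: sumr_ge0 => ? _); apply: mulr_ge0.
Qed.

Lemma W1_ge P Q d x : is_distr P -> is_distr Q ->
  (forall L, coupling P Q L -> x <= cost L d) -> x <= W1 P Q d.
Proof.
move=> dP dQ x_le; apply: lb_le_inf; last by move=> _ [L [cL ->]]; exact: x_le.
exists (cost (fun i j => P i * Q j) d), (fun i j => P i * Q j).
by split=> //; exact: coupling_prod.
Qed.

Lemma W1_ge0 P Q d : is_distr P -> is_distr Q -> (forall i j, 0 <= d i j) -> 0 <= W1 P Q d.
Proof.
move=> dP dQ d0; apply: W1_ge => // L [L0 _].
by do 2!(apply: sumr_ge0 => ? _); apply: mulr_ge0.
Qed.

Lemma W1_le_ub P Q d B : is_distr P -> is_distr Q ->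
  (forall i j, 0 <= d i j) -> (forall i j, d i j <= B) -> W1 P Q d <= B.
Proof.
move=> dP dQ d0 dB; apply: le_trans (W1_le_coupling d0 (coupling_prod dP dQ)) _.
under eq_bigr => i _ do under eq_bigr => j _ do rewrite -mulrA.
under eq_bigr => i _ do rewrite -mulr_sumr.
by apply: expect_le => // i; apply: expect_le.
Qed.

Lemma expect_dist_le_W1 P Q d f g e : is_distr P -> is_distr Q ->
  (forall k l, `|f k - g l| <= d k l + e) ->
  `|\sum_k P k * f k - \sum_l Q l * g l| <= W1 P Q d + e.
Proof.
move=> dP dQ fg; rewrite -lerBlDr; apply: W1_ge => // L cL.
rewrite lerBlDr (coupling_expectB _ _ cL) -[e]mulr1 -(coupling_mass dP cL).
rewrite mulr_sumr -big_split /=.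
apply: le_trans (ler_norm_sum _ _ _) (ler_sum _ _) => k _.
rewrite mulr_sumr -big_split /=; apply: le_trans (ler_norm_sum _ _ _) (ler_sum _ _) => l _.
case: cL => L0 _; rewrite normrM ger0_norm // [e * _]mulrC -mulrDr.
exact: ler_wpM2l.
Qed.

End Wasserstein.

Lemma TV_ge0 (R : realType) (S : finType) (P Q : S -> R) : 0 <= TV P Q.
Proof. by rewrite mulr_ge0 ?invr_ge0 ?ler0n ?sumr_ge0. Qed.

Lemma sum_delta (R : realType) (S : finType) (f : S -> R) k :
  \sum_l (k == l)%:R * f l = f k.
Proof.
rewrite (bigD1 k) //= eqxx mul1r big1 ?addr0 // => l /negbTE.
by rewrite eq_sym => ->; rewrite mul0r.
Qed.

Section OverlapCoupling.
Variables (R : realType) (S : finType) (P Q : S -> R).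
Hypotheses (dP : is_distr P) (dQ : is_distr Q).

Let m k := Num.min (P k) (Q k).
Let p k := P k - m k.
Let q k := Q k - m k.

Let p_ge0 k : 0 <= p k. Proof. by rewrite subr_ge0 ge_min lexx. Qed.
Let q_ge0 k : 0 <= q k. Proof. by rewrite subr_ge0 ge_min lexx orbT. Qed.

Let sum_excess : \sum_k p k = TV P Q /\ \sum_k q k = TV P Q.
Proof.
have sumD : \sum_k p k + \sum_k q k = \sum_k `|P k - Q k|.
  rewrite -big_split; apply: eq_bigr => k _ /=; rewrite /p /q /m.
  by case: leP => PQ; [rewrite ler0_norm ?subr_le0 // | rewrite gtr0_norm ?subr_gt0 //]; ring.
have sumB : \sum_k p k - \sum_k q k = 0.
  rewrite -sumrB (eq_bigr (fun k => P k - Q k)) => [|k _]; last by rewrite /p /q; ring.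
  by case: dP dQ => [_ P1] [_ Q1]; rewrite sumrB P1 Q1 subrr.
by rewrite /TV -sumD; split; lra.
Qed.

Let excess_divK (r : S -> R) k : (forall k, 0 <= r k) -> \sum_k r k = TV P Q ->
  r k * TV P Q / TV P Q = r k.
Proof.
move=> r0 sum_r; have [T0|T_neq0] := eqVneq (TV P Q) 0; last by rewrite mulfK.
rewrite T0 mulr0 mul0r; apply/esym.
by apply: (psumr_eq0P (P := predT) (fun i _ => r0 i)) => //; rewrite sum_r.
Qed.

(* Maximal coupling: the common mass min(P, Q) stays on the diagonal and the
   excesses of P and Q are coupled independently; when TV P Q = 0 the excesses
   vanish, so the junk value x / 0 = 0 is harmless. *)
Definition overlap_coupling k l := (k == l)%:R * m k + p k * q l / TV P Q.

Lemma coupling_overlap : coupling P Q overlap_coupling.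
Proof.
have [sum_p sum_q] := sum_excess.
split; [|split] => [k l|k|l]; rewrite /overlap_coupling.
- case: dP dQ => [P0 _] [Q0 _].
  apply: addr_ge0; last by apply: divr_ge0 (TV_ge0 _ _); exact: mulr_ge0.
  by apply: mulr_ge0; rewrite ?ler0n // le_min P0 Q0.
- rewrite big_split /= sum_delta; under eq_bigr => l _ do rewrite mulrAC.
  by rewrite -mulr_sumr sum_q mulrAC excess_divK // /p; ring.
- rewrite big_split /=; under eq_bigr => k _ do rewrite eq_sym.
  rewrite sum_delta; under eq_bigr => k _ do rewrite mulrAC mulrC.
  by rewrite -mulr_sumr -mulr_suml sum_p mulrA excess_divK // /q; ring.
Qed.

Lemma W1_le_diag_TV d c B : (forall i j, 0 <= d i j) -> (forall i j, d i j <= B) ->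
  (forall k, d k k <= c) -> W1 P Q d <= c + B * TV P Q.
Proof.
move=> d0 dB dc; apply: le_trans (W1_le_coupling d0 coupling_overlap) _.
rewrite /overlap_coupling.
under eq_bigr => k _ do under eq_bigr => l _ do rewrite mulrDl.
under eq_bigr => k _ do rewrite big_split /=.
rewrite big_split /=; apply: lerD.
  under eq_bigr => k _ do under eq_bigr => l _ do rewrite -mulrA.
  under eq_bigr => k _ do rewrite (sum_delta (fun l => m k * d k l)).
  apply: le_trans (expect_le dP dc); apply: ler_sum => k _.
  by rewrite ler_wpM2r // ge_min lexx.
have [sum_p sum_q] := sum_excess.
apply: le_trans (_ : \sum_k \sum_l p k * q l / TV P Q * B <= _).
  apply: ler_sum => k _; apply: ler_sum => l _; apply: ler_wpM2l => //.
  by apply: divr_ge0 (TV_ge0 _ _); exact: mulr_ge0.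
under eq_bigr => k _ do under eq_bigr => l _ do rewrite -!mulrA.
under eq_bigr => k _ do rewrite -mulr_sumr -mulr_suml sum_q.
rewrite -mulr_suml sum_p.
have [->|T_neq0] := eqVneq (TV P Q) 0; first by rewrite !(mul0r, mulr0).
by rewrite mulVKf // mulrC.
Qed.

End OverlapCoupling.

Lemma le_Rmax (R : realType) (S A : finType) (Rw Rw' : S -> A -> R) i j a :
  `|Rw i a - Rw' j a| <= Rmax Rw Rw'.
Proof. exact: (le_fmax (fun x : S * S * A => `|Rw x.1.1 x.2 - Rw' x.1.2 x.2|) (i, j, a)). Qed.

Lemma Rmax_ge0 (R : realType) (S A : finType) (Rw Rw' : S -> A -> R) : 0 <= Rmax Rw Rw'.
Proof. exact: fmax_ge0. Qed.

Lemma Vpi_le_Vstar (R : realType) (S A : finType) (gamma : R) (P : S -> A -> S -> R)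
  (Rw : S -> A -> R) (pi : S -> A) (V W : S -> R) :
  0 <= gamma < 1 -> is_kernel P -> is_Vstar gamma P Rw V -> is_Vpi gamma P Rw pi W ->
  forall s, W s <= V s.
Proof.
move=> g01 kP HV HW s; rewrite -subr_le0.
suff : fmax (fun s => W s - V s) <= 0 / (1 - gamma).
  by rewrite mul0r; exact: le_trans (le_fmax _ s).
apply: fmax_contraction => // t; rewrite add0r {1}HW.
have := le_fmax (fun a => Rw t a + gamma * \sum_u P t a u * V u) (pi t); rewrite -HV.
have := expect_le (kP t (pi t)) (le_fmax (fun u => W u - V u)); rewrite expectB.
by case/andP: g01 => g0 _ /(ler_wpM2l g0); lra.
Qed.

Section Bisimulation.
Variables (R : realType) (S A : finType) (gamma : R).
Variables (P P' : S -> A -> S -> R) (Rw Rw' : S -> A -> R).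
Hypotheses (gamma_ge0 : 0 <= gamma) (gamma_lt1 : gamma < 1).
Hypotheses (kP : is_kernel P) (kP' : is_kernel P').

Local Notation d := (dn gamma P P' Rw Rw').
Local Notation db := (dbar gamma P P' Rw Rw').

Lemma dn_ge0 n i j : 0 <= d n i j.
Proof.
elim: n i j => [|n IHn] i j //=; apply: fmax_ge0 => a.
by rewrite addr_ge0 ?mulr_ge0 ?W1_ge0.
Qed.

Lemma dn_le_Rmax n i j : d n i j <= Rmax Rw Rw' / (1 - gamma).
Proof.
have B_ge0 : 0 <= Rmax Rw Rw' / (1 - gamma).
  by apply: divr_ge0; rewrite ?Rmax_ge0 // subr_ge0 ltW.
elim: n i j => [|n IHn] i j //=; apply: fmax_le => // a.
have -> : Rmax Rw Rw' / (1 - gamma) = Rmax Rw Rw' + gamma * (Rmax Rw Rw' / (1 - gamma)).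
  by field; rewrite subr_eq0 gt_eqF.
by rewrite lerD ?le_Rmax // ler_wpM2l // W1_le_ub //; exact: dn_ge0.
Qed.

Lemma dn_le_dbar n i j : d n i j <= db i j.
Proof.
apply: sup_upper_bound; last by exists n.
split; first by exists (d 0 i j), 0%N.
by exists (Rmax Rw Rw' / (1 - gamma)) => _ [m _ <-]; exact: dn_le_Rmax.
Qed.

Lemma dbar_le i j c : (forall n, d n i j <= c) -> db i j <= c.
Proof. by move=> dc; apply: ge_sup => [|_ [n _ <-]]; [exists (d 0 i j), 0%N | exact: dc]. Qed.

Lemma dbar_ge0 i j : 0 <= db i j.
Proof. exact: dn_le_dbar 0%N i j. Qed.

Hypothesis gamma_gt0 : 0 < gamma.

Section OptimalValues.
Variables (Vr Vd : S -> R).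
Hypotheses (HVr : is_Vstar gamma P Rw Vr) (HVd : is_Vstar gamma P' Rw' Vd).

Definition Qgap i j a := `|Rw i a - Rw' j a|
  + gamma * `|\sum_t P i a t * Vr t - \sum_t P' j a t * Vd t|.

Lemma Vstar_dist_le_Qgap i j : `|Vr i - Vd j| <= fmax (Qgap i j).
Proof.
rewrite {1}HVr {1}HVd; apply: le_trans (fmax_dist_le _ _) (le_fmax2 _) => a.
rewrite /Qgap opprD addrACA -mulrBr; apply: le_trans (ler_normD _ _) _.
by rewrite normrM ger0_norm.
Qed.

Lemma Qgap_le_dn_succ n e i j a : (forall k l, `|Vr k - Vd l| <= d n k l + e) ->
  Qgap i j a <= d n.+1 i j + gamma * e.
Proof.
move=> le_dn; apply: le_trans (_ : `|Rw i a - Rw' j a| + gamma * W1 (P i a) (P' j a) (d n)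
  + gamma * e <= _); last by rewrite lerD2r; exact: (le_fmax (fun a => _)).
rewrite -addrA lerD2l -mulrDr ler_wpM2l //; exact: expect_dist_le_W1.
Qed.

Lemma Vstar_dist_le_dn M n : (forall k l, `|Vr k - Vd l| <= M) ->
  forall k l, `|Vr k - Vd l| <= d n k l + gamma ^+ n * M.
Proof.
move=> le_M; elim: n => [|n IHn] k l; first by rewrite add0r mul1r.
have M_ge0 : 0 <= M by exact: le_trans (le_M k k).
apply: le_trans (Vstar_dist_le_Qgap k l) (fmax_le _ _) => [|a].
  by rewrite addr_ge0 ?dn_ge0 ?mulr_ge0 ?exprn_ge0.
by rewrite exprS -mulrA; exact: Qgap_le_dn_succ.
Qed.

Lemma Qgap_le_dbar i j a : Qgap i j a <= db i j.
Proof.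
pose M := fmax (fun x : S * S => `|Vr x.1 - Vd x.2|).
have le_M k l : `|Vr k - Vd l| <= M by exact: (le_fmax (fun x : S * S => _) (k, l)).
apply: (@le_geometric_slack _ gamma (gamma * M)) => [|n]; first by rewrite gamma_gt0.
rewrite mulrCA; apply: le_trans (Qgap_le_dn_succ i j a (Vstar_dist_le_dn n le_M)) _.
by rewrite lerD2r dn_le_dbar.
Qed.

Lemma Vstar_dist_le_dbar i j : `|Vr i - Vd j| <= db i j.
Proof.
apply: le_trans (Vstar_dist_le_Qgap i j) (fmax_le (dbar_ge0 i j) _) => a.
exact: Qgap_le_dbar.
Qed.

Variables (pi : S -> A) (Vr_pi Vd_pi : S -> R).
Hypotheses (HVr_pi : is_Vpi gamma P Rw pi Vr_pi) (HVd_pi : is_Vpi gamma P' Rw' pi Vd_pi).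

Lemma gapnorm_le_dbar : gapnorm Vr Vr_pi
  <= (2 * fmax (fun s => db s s) + gapnorm Vd Vd_pi) / (1 - gamma).
Proof.
set Dm := fmax _; set G := gapnorm Vd Vd_pi.
have gamma01 : 0 <= gamma < 1 by rewrite gamma_ge0.
have Vd_pi_le := Vpi_le_Vstar gamma01 kP' HVd HVd_pi.
have G_ge0 : 0 <= G by apply: fmax_ge0 => s; rewrite subr_ge0.
have Dm_ge0 : 0 <= Dm by apply: fmax_ge0 => s; exact: dbar_ge0.
apply: fmax_contraction => // [|s]; first by rewrite addr_ge0 ?mulr_ge0.
set Gr := fmax _; set a := pi s.
set EPV := \sum_t P s a t * Vr t; set EPV' := \sum_t P' s a t * Vd t.
have V_le : Vr s - Vd s <= Dm.
  apply: le_trans (ler_norm _) _.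
  exact: le_trans (Vstar_dist_le_dbar s s) (le_fmax (fun s => db s s) s).
have Q_le : Qgap s s a <= Dm.
  exact: le_trans (Qgap_le_dbar s s a) (le_fmax (fun s => db s s) s).
have r_le : Rw' s a - Rw s a <= `|Rw s a - Rw' s a| by rewrite distrC ler_norm.
have E_le : gamma * (EPV' - EPV) <= gamma * `|EPV - EPV'|.
  by apply: ler_wpM2l => //; rewrite distrC ler_norm.
have gap_d_le : Vd s - Vd_pi s <= G by exact: (le_fmax (fun s => Vd s - Vd_pi s)).
have Egap_d_ge0 : 0 <= gamma * (EPV' - \sum_t P' s a t * Vd_pi t).
  by rewrite mulr_ge0 // -expectB; apply: expect_ge => // t; rewrite subr_ge0.
have Egap_r_le : gamma * (EPV - \sum_t P s a t * Vr_pi t) <= gamma * Gr.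
  apply: ler_wpM2l => //; rewrite -expectB.
  exact: expect_le (le_fmax (fun t => Vr t - Vr_pi t)).
rewrite /Qgap -/a -/EPV -/EPV' in Q_le.
by rewrite (HVr_pi s) (HVd_pi s) in gap_d_le *; lra.
Qed.

End OptimalValues.

Lemma dTV_ge0 s : 0 <= dTV gamma P P' Rw Rw' s.
Proof.
apply: fmax_ge0 => a; apply: addr_ge0 => //; apply: mulr_ge0 (TV_ge0 _ _).
by apply: divr_ge0; [exact: mulr_ge0 gamma_ge0 (Rmax_ge0 _ _) | rewrite subr_ge0 ltW].
Qed.

Lemma dn_diag_le_dTV n s : d n s s <= fmax (dTV gamma P P' Rw Rw') / (1 - gamma).
Proof.
set Tm := fmax _.
have c_ge0 : 0 <= Tm / (1 - gamma).
  by apply: divr_ge0; [exact: fmax_ge0 dTV_ge0 | rewrite subr_ge0 ltW].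
elim: n s => [|n IHn] s //=; apply: fmax_le => // a.
have W1_le := W1_le_diag_TV (kP s a) (kP' s a) (dn_ge0 n) (dn_le_Rmax n) IHn.
have dTV_le : `|Rw s a - Rw' s a| + gamma * Rmax Rw Rw' / (1 - gamma) * TV (P s a) (P' s a)
    <= Tm.
  exact: le_trans (le_fmax (fun a => _) a) (le_fmax (dTV gamma P P' Rw Rw') s).
have -> : Tm / (1 - gamma) = Tm + gamma * (Tm / (1 - gamma)).
  by field; rewrite subr_eq0 gt_eqF.
by have := ler_wpM2l gamma_ge0 W1_le; lra.
Qed.

Lemma fmax_dbar_diag_le_dTV :
  fmax (fun s => db s s) <= fmax (dTV gamma P P' Rw Rw') / (1 - gamma).
Proof.
apply: fmax_le => [|s]; last by apply: dbar_le => n; exact: dn_diag_le_dTV.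
by apply: divr_ge0; [exact: fmax_ge0 dTV_ge0 | rewrite subr_ge0 ltW].
Qed.

End Bisimulation.

Theorem theorem1 (R : realType) (S A : finType) (gamma : R)
  (P P' : S -> A -> S -> R) (Rw Rw' : S -> A -> R) (pi : S -> A)
  (Vr_star Vr_pi Vd_star Vd_pi : S -> R) :
  0 < gamma < 1 ->
  is_kernel P -> is_kernel P' ->
  is_Vstar gamma P Rw Vr_star -> is_Vpi gamma P Rw pi Vr_pi ->
  is_Vstar gamma P' Rw' Vd_star -> is_Vpi gamma P' Rw' pi Vd_pi ->
  gapnorm Vr_star Vr_pi
    <= 2 / (1 - gamma) * fmax (fun s : S => dbar gamma P P' Rw Rw' s s)
       + (1 + gamma) / (1 - gamma) * gapnorm Vd_star Vd_pi
  /\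
  2 / (1 - gamma) * fmax (fun s : S => dbar gamma P P' Rw Rw' s s)
       + (1 + gamma) / (1 - gamma) * gapnorm Vd_star Vd_pi
    <= 2 / (1 - gamma) ^+ 2 * fmax (fun s : S => dTV gamma P P' Rw Rw' s)
       + (1 + gamma) / (1 - gamma) * gapnorm Vd_star Vd_pi.
Proof.
move=> /andP[g_gt0 g_lt1] kP kP' HVr HVr_pi HVd HVd_pi.
have g_ge0 := ltW g_gt0; have g01 : 0 <= gamma < 1 by rewrite g_ge0.
have gap_r := gapnorm_le_dbar g_ge0 g_lt1 kP kP' g_gt0 HVr HVd HVr_pi HVd_pi.
have Dm_le := fmax_dbar_diag_le_dTV Rw Rw' g_ge0 g_lt1 kP kP'.
have G_ge0 : 0 <= gapnorm Vd_star Vd_pi.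
  by apply: fmax_ge0 => s; rewrite subr_ge0 (Vpi_le_Vstar g01 kP' HVd HVd_pi).
move: gap_r Dm_le G_ge0; rewrite -exprVn.
set Dm := fmax _; set G := gapnorm _ _; set Tm := fmax _; set u := (1 - gamma)^-1.
have u_ge0 : 0 <= u by rewrite invr_ge0 subr_ge0 ltW.
move=> gap_r Dm_le G_ge0; split.
- by have := mulr_ge0 (mulr_ge0 g_ge0 u_ge0) G_ge0; lra.
- by have := ler_wpM2l (mulr_ge0 (ler0n _ 2) u_ge0) Dm_le; rewrite expr2; lra.
Qed.
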